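(* For every $i\in I^+$ and every $a=(a_j)_{j\in I}\in\mathbb{N}_0^{I}$, $$\Omega_i\, x^{a}=\Big(\prod_{l=-n}^{-i}q^{2a_l}\Big)\sum_{j=i}^{n}q^{\,j-i+(a_{1-j}+\cdots+a_{j-1})}\,x^{a+\varepsilon_{-j}+\varepsilon_j}$$ in $\mathcal X$, where $a_{1-j}+\cdots+a_{j-1}$ denotes the sum of $a_k$ over all $k\in I$ with $1-j\le k\le j-1$.
   Context: Let $\mathbf{k}$ be a field of characteristic $0$, $q\in\mathbf{k}$ invertible and not a root of unity, $n\ge 2$, $I=\{-n,\dots,-1,1,\dots,n\}$ (ordered as integers; $0\notin I$), $I^+=\{1,\dots,n\}$, $\lambda=q-q^{-1}$. The quantum symplectic space $\mathcal X$ is the $\mathbf{k}$-algebra generated by $x_i$ ($i\in I$) with defining relations $x_jx_i=qx_ix_j$ for $i<j$, $j\neq -i$, and $x_ix_{-i}=q^2x_{-i}x_i+q^2\lambda\Omega_{i+1}$ for $i\in I^+$, where $\Omega_i=\sum_{j=i}^{n}q^{j-i}x_{-j}x_j$ for $i\in I^+$ and $\Omega_{n+1}=0$. For $a=(a_i)_{i\in I}\in\mathbb{N}_0^{I}$ put $x^a=x_{-n}^{a_{-n}}x_{1-n}^{a_{1-n}}\cdots x_{-1}^{a_{-1}}x_1^{a_1}\cdots x_n^{a_n}$ (a normal monomial: factors in increasing order of index); the normal monomials form a $\mathbf{k}$-basis of $\mathcal X$. $\varepsilon_i$ ($i\in I$) denotes the standard unit vector in $\mathbb{Z}^{I}$.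 *)

From HB Require Import structures.
From mathcomp Require Import all_boot all_order all_algebra.
Set Implicit Arguments. Unset Strict Implicit. Unset Printing Implicit Defensive.
Import Order.TTheory GRing.Theory Num.Theory.
Local Open Scope ring_scope.

(* The index set I = {-n,...,-1,1,...,n} as a sequence of integers in
   increasing order. *)
Definition idxI (n : nat) : seq int :=
  [seq - (Posz (n - k)%N) | k <- iota 0 n] ++ [seq Posz k.+1 | k <- iota 0 n].

Definition Omega (k : fieldType) (A : algType k) (q : k) (x : int -> A)
    (n i : nat) : A :=
  \sum_(i <= j < n.+1) (q ^+ (j - i)) *: (x (- Posz j) * x (Posz j)).

Definition mono (k : fieldType) (A : algType k) (x : int -> A) (n : nat)
    (a : int -> nat) : A :=
  \prod_(l <- idxI n) x l ^+ a l.

Definition addeps (a : int -> nat) (j : int) : int -> nat :=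
  fun l => (a l + (l == j) + (l == - j))%N.

Definition qsymp_rel (k : fieldType) (A : algType k) (q : k) (x : int -> A)
    (n : nat) : Prop :=
  (forall i j : int, i \in idxI n -> j \in idxI n -> i < j -> j != - i ->
      x j * x i = q *: (x i * x j))
  /\ (forall i : nat, (1 <= i <= n)%N ->
      x (Posz i) * x (- Posz i) =
        (q ^+ 2) *: (x (- Posz i) * x (Posz i))
        + (q ^+ 2 * (q - q^-1)) *: Omega q x n i.+1).

From HB Require Import structures.
From mathcomp Require Import all_boot all_order all_algebra.
From mathcomp Require Import zify ring.
Import Order.TTheory GRing.Theory Num.Theory.
Set Implicit Arguments. Unset Strict Implicit. Unset Printing Implicit Defensive.
Local Open Scope ring_scope.

(* Omega_i q-commutes with every generator of index below i: it commutes with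
   x_l for |l| < i, and Omega_i x_{-m} = q^2 x_{-m} Omega_i for m >= i (for
   m > i each summand x_{-j} x_j picks up q * q; for m = i this is the defining
   relation between x_i x_{-i} and Omega_{i+1}).  Pushing Omega_i through the
   part of x^a with indices < i therefore produces the factor
   prod_{l <= -i} q^{2 a_l}.  Each summand x_{-j} x_j of Omega_i is then
   absorbed into the monomial: x_{-j} moves left and x_j moves right across the
   generators of index strictly between -j and j, each crossing costing one q. *)

Lemma big_cat_window (R : Type) (idx : R) (op : Monoid.law idx) (I : eqType)
    (r1 r2 r3 : seq I) (P : pred I) (F : I -> R) :
  {in r1 ++ r3, forall i, ~~ P i} -> {in r2, forall i, P i} ->
  \big[op/idx]_(i <- r1 ++ r2 ++ r3 | P i) F i = \big[op/idx]_(i <- r2) F i.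
Proof.
move=> outside inside; rewrite !big_cat (@big_hasC _ _ _ _ r1) ?(@big_hasC _ _ _ _ r3).
- by rewrite Monoid.mul1m Monoid.mulm1; apply: big_rmcond_in => i /inside ->.
- by apply/hasPn => i i_r3; apply: outside; rewrite mem_cat i_r3 orbT.
- by apply/hasPn => i i_r1; apply: outside; rewrite mem_cat i_r1.
Qed.

Definition zseg (lo hi : int) : seq int := [seq lo + k%:Z | k <- iota 0 (absz (hi - lo))].

Lemma mem_zseg (lo hi l : int) : lo <= hi -> (l \in zseg lo hi) = (lo <= l < hi).
Proof.
move=> le_lo_hi; apply/mapP/idP => [[k + ->]|l_in].
  by rewrite mem_iota; lia.
by exists (absz (l - lo)); [rewrite mem_iota|]; lia.
Qed.

Lemma zseg_cat (lo m hi : int) : lo <= m <= hi -> zseg lo hi = zseg lo m ++ zseg m hi.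
Proof.
move=> bounds; rewrite /zseg.
have -> : absz (hi - lo) = (absz (m - lo) + absz (hi - m))%N by lia.
rewrite iotaD map_cat add0n; congr (_ ++ _).
rewrite -[X in iota X]addn0 iotaDl -map_comp; apply: eq_map => k /=; lia.
Qed.

Lemma zseg_cons (lo hi : int) : lo < hi -> zseg lo hi = lo :: zseg (lo + 1) hi.
Proof.
move=> lt_lo_hi; rewrite (@zseg_cat lo (lo + 1)) /=; last by lia.
have one : absz (lo + 1 - lo)%R = 1%N by lia.
by rewrite {1}/zseg one /= addr0.
Qed.

Lemma idxI_zseg (n : nat) : idxI n = zseg (- n%:Z) 0 ++ zseg 1 n.+1.
Proof.
rewrite /idxI /zseg; congr (_ ++ _); last first.
  by have -> : absz (n.+1%:Z - 1) = n by lia.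
have -> : absz (0 - - n%:Z) = n by lia.
by apply/eq_in_map => k; rewrite mem_iota; lia.
Qed.

Lemma mem_idxI (n : nat) (l : int) :
  (l \in idxI n) = [&& l != 0, - n%:Z <= l & l <= n%:Z].
Proof. by rewrite idxI_zseg mem_cat !mem_zseg //; apply/idP/idP; lia. Qed.

Definition idxI_below (n i : nat) : seq int := zseg (- n%:Z) 0 ++ zseg 1 i.
Definition idxI_from (n i : nat) : seq int := zseg i n.+1.

Lemma idxI_below_from (n i : nat) : (1 <= i <= n.+1)%N -> idxI n = idxI_below n i ++ idxI_from n i.
Proof. by move=> i_bounds; rewrite idxI_zseg (@zseg_cat 1 i) ?catA //; lia. Qed.

Lemma mem_idxI_below (n i : nat) (l : int) :
  (1 <= i)%N -> (l \in idxI_below n i) = [&& l != 0, - n%:Z <= l & l < i%:Z].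
Proof. by move=> i_ge1; rewrite mem_cat !mem_zseg //; [apply/idP/idP|]; lia. Qed.

Lemma mem_idxI_from (n i : nat) (l : int) :
  (i <= n.+1)%N -> (l \in idxI_from n i) = (i%:Z <= l <= n%:Z).
Proof. by move=> le_in; rewrite mem_zseg; [apply/idP/idP|]; lia. Qed.

Section QCommutation.
Variables (R : comUnitRingType) (A : algType R).

Definition qcomm (al : R) (u v : A) : Prop := u * v = al *: (v * u).

Lemma qcomm_mulr (al be : R) (u v w : A) :
  qcomm al u v -> qcomm be u w -> qcomm (al * be) u (v * w).
Proof.
rewrite /qcomm => uv uw.
by rewrite mulrA uv -scalerAl -(mulrA v u w) uw -scalerAr scalerA mulrA.
Qed.

Lemma qcomm_mull (al be : R) (u v w : A) :
  qcomm al u w -> qcomm be v w -> qcomm (al * be) (u * v) w.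
Proof.
rewrite /qcomm => uw vw.
by rewrite -mulrA vw -scalerAr (mulrA u w v) uw -scalerAl scalerA mulrC mulrA.
Qed.

Lemma qcomm_exprr (al : R) (u v : A) (e : nat) :
  qcomm al u v -> qcomm (al ^+ e) u (v ^+ e).
Proof.
move=> uv; elim: e => [|e IHe]; first by rewrite /qcomm !expr0 mulr1 mul1r scale1r.
by rewrite !exprS; apply: qcomm_mulr.
Qed.

Lemma qcomm_exprl (al : R) (u v : A) (e : nat) :
  qcomm al u v -> qcomm (al ^+ e) (u ^+ e) v.
Proof.
move=> uv; elim: e => [|e IHe]; first by rewrite /qcomm !expr0 mulr1 mul1r scale1r.
by rewrite !exprS; apply: qcomm_mull.
Qed.

Lemma qcomm_prodr (I : eqType) (r : seq I) (P : pred I) (al : I -> R) (u : A) (F : I -> A) :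
  (forall i, i \in r -> P i -> qcomm (al i) u (F i)) ->
  qcomm (\prod_(i <- r | P i) al i) u (\prod_(i <- r | P i) F i).
Proof.
move=> comm_F.
rewrite [\prod_(i <- r | P i) al i]big_seq_cond [\prod_(i <- r | P i) F i]big_seq_cond.
apply: (big_ind2 (fun be v => qcomm be u v)).
- by rewrite /qcomm mulr1 mul1r scale1r.
- by move=> ? ? ? ?; apply: qcomm_mulr.
- by move=> i /andP[]; apply: comm_F.
Qed.

Lemma qcomm_prodl (I : eqType) (r : seq I) (P : pred I) (al : I -> R) (F : I -> A) (w : A) :
  (forall i, i \in r -> P i -> qcomm (al i) (F i) w) ->
  qcomm (\prod_(i <- r | P i) al i) (\prod_(i <- r | P i) F i) w.
Proof.
move=> comm_F.
rewrite [\prod_(i <- r | P i) al i]big_seq_cond [\prod_(i <- r | P i) F i]big_seq_cond.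
apply: (big_ind2 (fun be v => qcomm be v w)).
- by rewrite /qcomm mulr1 mul1r scale1r.
- by move=> ? ? ? ?; apply: qcomm_mull.
- by move=> i /andP[]; apply: comm_F.
Qed.

Lemma qcomm_addl (al : R) (u v w : A) :
  qcomm al u w -> qcomm al v w -> qcomm al (u + v) w.
Proof. by rewrite /qcomm => uw vw; rewrite mulrDl mulrDr uw vw scalerDr. Qed.

Lemma qcomm_scalel (al c : R) (u w : A) : qcomm al u w -> qcomm al (c *: u) w.
Proof. by rewrite /qcomm => uw; rewrite -scalerAl uw -scalerAr !scalerA mulrC. Qed.

Lemma qcomm_suml (I : eqType) (r : seq I) (P : pred I) (al : R) (F : I -> A) (w : A) :
  (forall i, i \in r -> P i -> qcomm al (F i) w) -> qcomm al (\sum_(i <- r | P i) F i) w.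
Proof.
move=> comm_F; rewrite big_seq_cond.
apply: (big_ind (fun v => qcomm al v w)).
- by rewrite /qcomm mulr0 mul0r scaler0.
- by move=> ? ?; apply: qcomm_addl.
- by move=> i /andP[]; apply: comm_F.
Qed.

Lemma qcomm_sym (al : R) (u v : A) :
  al \is a GRing.unit -> qcomm al u v -> qcomm al^-1 v u.
Proof. by rewrite /qcomm => al_unit ->; rewrite scalerA mulVr ?scale1r. Qed.

End QCommutation.

Section QuantumSymplecticSpace.
Variables (k : fieldType) (A : algType k) (q : k) (n : nat) (x : int -> A).

Local Notation Om := (Omega q x n).

Lemma Omega_split (i m : nat) : (i <= m <= n.+1)%N ->
  Om i = \sum_(i <= j < m) q ^+ (j - i) *: (x (- j%:Z) * x j%:Z) + q ^+ (m - i) *: Om m.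
Proof.
move=> /andP[le_im le_mn]; rewrite /Omega (@big_cat_nat _ _ _ m) // /=; congr (_ + _).
rewrite scaler_sumr; apply: eq_big_nat => j /andP[le_mj _].
by rewrite scalerA -exprD; congr (_ ^+ _ *: _); lia.
Qed.

Lemma Omega_rec (i : nat) : (i <= n)%N -> Om i = x (- i%:Z) * x i%:Z + q *: Om i.+1.
Proof. by move=> le_in; rewrite (@Omega_split i i.+1) ?big_nat1 ?subnn ?subSnn ?scale1r ?leqnSn. Qed.

Hypothesis qcomm_x : forall i j : int, i \in idxI n -> j \in idxI n -> i < j -> j != - i ->
  qcomm q (x j) (x i).

Lemma pair_qcomm_neg (j m : nat) :
  (1 <= j)%N -> (j < m <= n)%N -> qcomm (q ^+ 2) (x (- j%:Z) * x j%:Z) (x (- m%:Z)).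
Proof. by move=> *; rewrite expr2; apply: qcomm_mull; apply: qcomm_x; rewrite ?mem_idxI; lia. Qed.

Variable a : int -> nat.
Local Notation xprod s := (\prod_(l <- s) x l ^+ a l).

Lemma pair_insert (j : nat) (s1 s2 t1 t2 : seq int) :
  (1 <= j <= n)%N ->
  {in s2 ++ t1, forall l, (l \in idxI n) && (- j%:Z < l < j%:Z)} ->
  {in s1 ++ t2, forall l, (l != j%:Z) && (l != - j%:Z)} ->
  xprod (s1 ++ - j%:Z :: s2) * (x (- j%:Z) * x j%:Z * xprod (t1 ++ j%:Z :: t2)) =
    q ^+ (\sum_(l <- s2 ++ t1) a l) *:
      \prod_(l <- s1 ++ - j%:Z :: s2 ++ t1 ++ j%:Z :: t2) x l ^+ addeps a j%:Z l.
Proof.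
move=> j_bounds window outside.
have mj_in : - j%:Z \in idxI n by rewrite mem_idxI; lia.
have j_in : j%:Z \in idxI n by rewrite mem_idxI; lia.
have past_s2 y : y * xprod s2 * x (- j%:Z) = q ^+ (\sum_(l <- s2) a l) *: (y * x (- j%:Z) * xprod s2).
  have : qcomm (\prod_(l <- s2) q ^+ a l) (xprod s2) (x (- j%:Z)).
    apply: qcomm_prodl => l l_in _; apply: qcomm_exprl.
    have /andP[l_in_I l_win] : (l \in idxI n) && (- j%:Z < l < j%:Z).
      by apply: window; rewrite mem_cat l_in.
    by apply: qcomm_x => //; lia.
  by rewrite prodrXr -mulrA => ->; rewrite -scalerAr mulrA.
have past_t1 y : y * x j%:Z * xprod t1 = q ^+ (\sum_(l <- t1) a l) *: (y * xprod t1 * x j%:Z).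
  have : qcomm (\prod_(l <- t1) q ^+ a l) (x j%:Z) (xprod t1).
    apply: qcomm_prodr => l l_in _; apply: qcomm_exprr.
    have /andP[l_in_I l_win] : (l \in idxI n) && (- j%:Z < l < j%:Z).
      by apply: window; rewrite mem_cat l_in orbT.
    by apply: qcomm_x => //; lia.
  by rewrite prodrXr -mulrA => ->; rewrite -scalerAr mulrA.
have addeps_out s : {subset s <= s1 ++ s2 ++ t1 ++ t2} ->
    \prod_(l <- s) x l ^+ addeps a j%:Z l = xprod s.
  move=> sub_s; apply: eq_big_seq => l /sub_s; rewrite !mem_cat => l_in.
  have /andP[neq_j neq_mj] : (l != j%:Z) && (l != - j%:Z).
    case/or4P: l_in => l_in.
    - by apply: outside; rewrite mem_cat l_in.
    - by have := window l; rewrite mem_cat l_in => /(_ isT); lia.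
    - by have := window l; rewrite mem_cat l_in orbT => /(_ isT); lia.
    - by apply: outside; rewrite mem_cat l_in orbT.
  by rewrite /addeps (negbTE neq_j) (negbTE neq_mj) !addn0.
have addeps_mj : addeps a j%:Z (- j%:Z) = (a (- j%:Z)).+1.
  by rewrite /addeps eqxx (_ : (- j%:Z == j%:Z) = false) ?addn0 ?addn1 //; lia.
have addeps_j : addeps a j%:Z j%:Z = (a j%:Z).+1.
  by rewrite /addeps eqxx (_ : (j%:Z == - j%:Z) = false) ?addn0 ?addn1 //; lia.
rewrite !(big_cat, big_cons) /= addeps_mj addeps_j !addeps_out;
  try by move=> l; rewrite !mem_cat => ->; rewrite ?orbT.
by rewrite exprSr [x j%:Z ^+ _.+1]exprS !mulrA past_s2 -!scalerAl past_t1 -!scalerAl scalerA -exprD.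
Qed.

Lemma pair_insert_idxI (i j : nat) : (1 <= i <= j)%N -> (j <= n)%N ->
  xprod (idxI_below n i) * (x (- j%:Z) * x j%:Z * xprod (idxI_from n i)) =
    q ^+ (\sum_(l <- idxI n | (1 - j%:Z <= l) && (l <= j%:Z - 1)) a l) *:
      mono x n (addeps a j%:Z).
Proof.
move=> i_bounds le_jn.
set s1 := zseg (- n%:Z) (- j%:Z); set s2 := zseg (- j%:Z + 1) 0 ++ zseg 1 i.
set t1 := zseg i j; set t2 := zseg (j%:Z + 1) n.+1.
have below : idxI_below n i = s1 ++ - j%:Z :: s2.
  by rewrite /idxI_below (@zseg_cat (- n%:Z) (- j%:Z)) ?(@zseg_cons (- j%:Z)) -?catA //; lia.
have from : idxI_from n i = t1 ++ j%:Z :: t2.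
  by rewrite /idxI_from (@zseg_cat i j) ?(@zseg_cons j) //; lia.
have whole : idxI n = s1 ++ - j%:Z :: s2 ++ t1 ++ j%:Z :: t2.
  by rewrite (@idxI_below_from n i) ?below ?from -1?catA //; lia.
have mem_s1 l : (l \in s1) = (- n%:Z <= l < - j%:Z) by rewrite mem_zseg //; lia.
have mem_s2 l : (l \in s2) = [&& l != 0, - j%:Z < l & l < i%:Z].
  by rewrite mem_cat !mem_zseg; [apply/idP/idP| |]; lia.
have mem_t1 l : (l \in t1) = (i%:Z <= l < j%:Z) by rewrite mem_zseg //; lia.
have mem_t2 l : (l \in t2) = (j%:Z < l <= n%:Z) by rewrite mem_zseg //; lia.
have window : {in s2 ++ t1, forall l, (l \in idxI n) && (- j%:Z < l < j%:Z)}.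
  by move=> l; rewrite mem_cat mem_s2 mem_t1 mem_idxI; lia.
have outside : {in s1 ++ t2, forall l, (l != j%:Z) && (l != - j%:Z)}.
  by move=> l; rewrite mem_cat mem_s1 mem_t2; lia.
rewrite below from (pair_insert _ window outside); last by lia.
rewrite /mono whole; congr (_ ^+ _ *: _).
rewrite -(cat_rcons (- j%:Z) s1) (catA s2 t1) big_cat_window // => l.
- by rewrite mem_cat mem_rcons !in_cons mem_s1 mem_t2; lia.
- by rewrite mem_cat mem_s2 mem_t1; lia.
Qed.

Hypothesis q_neq0 : q != 0.

Lemma pair_commute (j : nat) (l : int) :
  (j <= n)%N -> l \in idxI n -> (absz l < j)%N -> qcomm 1 (x (- j%:Z) * x j%:Z) (x l).
Proof.
move=> le_jn l_in lt_lj; rewrite -(mulVf q_neq0).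
have mj_in : - j%:Z \in idxI n by rewrite mem_idxI; lia.
have j_in : j%:Z \in idxI n by rewrite mem_idxI; lia.
apply: qcomm_mull; last by apply: qcomm_x => //; lia.
by apply: qcomm_sym; [rewrite unitfE | apply: qcomm_x => //; lia].
Qed.

Lemma Omega_commute (i : nat) (l : int) : l \in idxI n -> (absz l < i)%N -> qcomm 1 (Om i) (x l).
Proof.
move=> l_in lt_li; apply: qcomm_suml => j; rewrite mem_index_iota => /andP[le_ij lt_jn] _.
by apply: qcomm_scalel; apply: pair_commute => //; lia.
Qed.

Hypothesis x_pair_rel : forall i : nat, (1 <= i <= n)%N ->
  x i%:Z * x (- i%:Z) = q ^+ 2 *: (x (- i%:Z) * x i%:Z) + (q ^+ 2 * (q - q^-1)) *: Om i.+1.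

Lemma Omega_qcomm_self (m : nat) : (1 <= m <= n)%N -> qcomm (q ^+ 2) (Om m) (x (- m%:Z)).
Proof.
move=> m_bounds; have commute : qcomm 1 (Om m.+1) (x (- m%:Z)).
  by apply: Omega_commute; rewrite ?mem_idxI; lia.
rewrite /qcomm (@Omega_rec m); last by lia.
rewrite mulrDl -mulrA x_pair_rel // -scalerAl commute scale1r mulrDr -!scalerAr.
rewrite [in RHS]mulrDr scalerDr -scalerAr scalerA -addrA; congr (_ + _).
by rewrite -scalerDl; congr (_ *: _); field.
Qed.

Lemma Omega_qcomm_neg (i m : nat) :
  (1 <= i <= m)%N -> (m <= n)%N -> qcomm (q ^+ 2) (Om i) (x (- m%:Z)).
Proof.
move=> i_bounds le_mn; rewrite (@Omega_split i m); last by lia.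
apply: qcomm_addl; last by apply: qcomm_scalel; apply: Omega_qcomm_self; lia.
apply: qcomm_suml => j; rewrite mem_index_iota => j_bounds _.
by apply: qcomm_scalel; apply: pair_qcomm_neg; lia.
Qed.

Lemma Omega_mul_below (i : nat) : (1 <= i <= n)%N ->
  Om i * xprod (idxI_below n i) =
    (\prod_(l <- idxI n | l <= - i%:Z) q ^+ (2 * a l)) *: (xprod (idxI_below n i) * Om i).
Proof.
move=> i_bounds.
have -> : \prod_(l <- idxI n | l <= - i%:Z) q ^+ (2 * a l) =
    \prod_(l <- idxI_below n i) (if l <= - i%:Z then q ^+ 2 else 1) ^+ a l.
  rewrite (@idxI_below_from n i); last by lia.
  have upper_trivial : \prod_(l <- idxI_from n i | l <= - i%:Z) q ^+ (2 * a l) = 1.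
    by apply: big1_seq => l /andP[le_l]; rewrite mem_idxI_from; lia.
  rewrite big_cat upper_trivial Monoid.mulm1 big_mkcond.
  by apply: eq_bigr => l _; case: ifP; rewrite ?exprM ?expr1n.
apply: qcomm_prodr => l; rewrite mem_idxI_below; last by lia.
move=> l_bounds _; apply: qcomm_exprr; case: ifP => le_l.
  have -> : l = - (absz l)%:Z by lia.
  by apply: Omega_qcomm_neg; lia.
by apply: Omega_commute; rewrite ?mem_idxI; lia.
Qed.

End QuantumSymplecticSpace.

Theorem lemma2p4 (k : fieldType) (q : k) (n : nat) (A : algType k) (x : int -> A) :
  [pchar k] =i pred0 ->
  q != 0 ->
  (forall m : nat, (0 < m)%N -> q ^+ m != 1) ->
  (2 <= n)%N ->
  qsymp_rel q x n ->
  forall (i : nat) (a : int -> nat), (1 <= i <= n)%N ->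
    Omega q x n i * mono x n a =
      (\prod_(l <- idxI n | l <= - Posz i) q ^+ (2 * a l)) *:
        \sum_(i <= j < n.+1)
          q ^+ ((j - i)%N + (\sum_(l <- idxI n | ((1 - Posz j <= l) && (l <= Posz j - 1))%R) a l)%N)%N
            *: mono x n (addeps a (Posz j)).
Proof.
move=> _ q_neq0 _ _ [x_qcomm x_pair] i a i_bounds.
have -> : mono x n a = \prod_(l <- idxI_below n i) x l ^+ a l * \prod_(l <- idxI_from n i) x l ^+ a l.
  by rewrite /mono (@idxI_below_from n i) ?big_cat //; lia.
rewrite mulrA (Omega_mul_below x_qcomm a q_neq0 x_pair) // -scalerAl -mulrA; congr (_ *: _).
rewrite /Omega mulr_suml mulr_sumr; apply: eq_big_nat => j /andP[le_ij lt_jn].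
rewrite -scalerAl -scalerAr (pair_insert_idxI x_qcomm a) ?scalerA -?exprD //; lia.
Qed.
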